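(* Let $a\in\mathbb{R}$, $\sigma>0$, $\gamma>0$, $\lambda>0$, $T\ge1$, channel transition probabilities $p_{cc'}$, and let $\tilde V_t$, $t=0,\ldots,T$, be defined on $\mathbb{R}_+\times\{0,1\}$ by the folded value iteration in the context. Then for each $c\in\{0,1\}$ and each $t\in\{0,1,\ldots,T\}$, the function $\tilde\Delta\mapsto\tilde V_t(\tilde\Delta,c)$ is non-decreasing on $\mathbb{R}_+$.
   Context: $p_{01},p_{10}\in[0,1]$, $p_{00}=1-p_{01}$, $p_{11}=1-p_{10}$; $\psi(v)=e^{-v^2/(2\sigma^2)}$, $\varphi(v,s)=\psi(v-s)+\psi(v+s)$; $\mathbb{R}_+=[0,\infty)$. Folded recursion: $\tilde V_0\equiv1$, $\tilde Q_{t+1}(\tilde\Delta,c;0)=e^{\gamma\tilde\Delta^2}\sum_{c_+\in\{0,1\}}p_{cc_+}\int_{\mathbb{R}_+}\varphi(\tilde\Delta_+,a\tilde\Delta)\tilde V_t(\tilde\Delta_+,c_+)d\tilde\Delta_+$, $\tilde Q_{t+1}(\tilde\Delta,c;1)=(1-c)e^{\gamma(\lambda+\tilde\Delta^2)}\sum_{c_+}p_{cc_+}\int_{\mathbb{R}_+}\varphi(\tilde\Delta_+,a\tilde\Delta)\tilde V_t(\tilde\Delta_+,c_+)d\tilde\Delta_++2c\,e^{\gamma\lambda}\sum_{c_+}p_{cc_+}\int_{\mathbb{R}_+}\psi(\tilde\Delta_+)\tilde V_t(\tilde\Delta_+,c_+)d\tilde\Delta_+$, $\tilde V_{t+1}(\tilde\Delta,c)=\min_{u\in\{0,1\}}\tilde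 Q_{t+1}(\tilde\Delta,c;u)$. This is the value iteration of the ''folded'' risk-sensitive MDP for an estimation error magnitude $\tilde\Delta$ and Gilbert–Elliott channel state $c$. *)

From HB Require Import structures.
From mathcomp Require Import all_boot all_order all_algebra.
From mathcomp Require Import all_classical all_reals all_analysis.
Set Implicit Arguments. Unset Strict Implicit. Unset Printing Implicit Defensive.
Import Order.TTheory GRing.Theory Num.Theory.
Local Open Scope classical_set_scope.
Local Open Scope ring_scope.

Section Folded.
Variable R : realType.

Definition psi (sigma v : R) : R := expR (- (v ^+ 2) / (2 * sigma ^+ 2)).
Definition varphi (sigma v s : R) : R := psi sigma (v - s) + psi sigma (v + s).

(* channel states c in {0,1} encoded as bool (false = 0, true = 1);
   p c c' is the transition probability p_{cc'} *)
Definition ptrans (p01 p10 : R) (c c' : bool) : R :=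
  match c, c' with
  | false, false => 1 - p01
  | false, true => p01
  | true, false => p10
  | true, true => 1 - p10
  end.

Definition intRp (f : R -> \bar R) : \bar R :=
  (\int[lebesgue_measure]_(x in `[0%R, +oo[) f x)%E.

Definition kernel_term (p01 p10 : R) (k : R -> R) (V : R -> bool -> \bar R)
    (c : bool) : \bar R :=
  (\sum_(cp : bool) (ptrans p01 p10 c cp)%:E * intRp (fun x => (k x)%:E * V x cp))%E.

Definition Qt0 (a sigma gamma p01 p10 : R) (V : R -> bool -> \bar R)
    (D : R) (c : bool) : \bar R :=
  ((expR (gamma * D ^+ 2))%:E *
    kernel_term p01 p10 (fun x => varphi sigma x (a * D)) V c)%E.

Definition Qt1 (a sigma gamma lambda p01 p10 : R) (V : R -> bool -> \bar R)
    (D : R) (c : bool) : \bar R :=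
  (((1 - (c : nat)%:R) * expR (gamma * (lambda + D ^+ 2)))%:E *
      kernel_term p01 p10 (fun x => varphi sigma x (a * D)) V c
   + (2 * (c : nat)%:R * expR (gamma * lambda))%:E *
      kernel_term p01 p10 (fun x => psi sigma x) V c)%E.

Fixpoint Vt (a sigma gamma lambda p01 p10 : R) (t : nat) : R -> bool -> \bar R :=
  match t with
  | 0 => fun _ _ => 1%E
  | t'.+1 => fun D c =>
      Order.min (Qt0 a sigma gamma p01 p10 (Vt a sigma gamma lambda p01 p10 t') D c)
                (Qt1 a sigma gamma lambda p01 p10 (Vt a sigma gamma lambda p01 p10 t') D c)
  end.

End Folded.

From mathcomp Require Import all_boot all_order all_algebra.
From mathcomp Require Import all_classical all_reals all_analysis.
From mathcomp Require Import measurable_realfun ring lra.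
Set Implicit Arguments.
Unset Strict Implicit.
Unset Printing Implicit Defensive.

Import Order.TTheory GRing.Theory Num.Theory.
Import numFieldTopology.Exports.
Local Open Scope classical_set_scope.
Local Open Scope ring_scope.

(* Both
   [Qt0] and [Qt1] multiply factors that are nondecreasing in [D >= 0] with the
   kernel term [int_{R+} varphi(x, a D) V(x) dx] (the [psi] term does not depend
   on [D]), so it suffices that [s |-> int_{R+} varphi(x, s) V(x) dx] is
   nondecreasing in [|s|] for every nonnegative nondecreasing [V].
   The folded Gaussians [varphi(., s)] all have the same mass on [R+], and
   writing [varphi(x, s) = 2 exp(-(x^2 + s^2) / (2 sigma^2)) cosh(x s / sigma^2)],
   the identity [2 cosh a cosh b = cosh (a + b) + cosh (a - b)] shows that
   [varphi(x, s2) / varphi(x, s1)] is nondecreasing in [x] when [0 <= s1 <= s2].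
   So [varphi(., s2) - varphi(., s1)] changes sign once, from negative to
   positive, and raising [s] moves mass towards larger values of [V]. *)

Section cosh2.
Variable R : realType.
Implicit Types a b u w : R.

Definition cosh2 u : R := expR u + expR (- u).

Lemma cosh2N u : cosh2 (- u) = cosh2 u.
Proof. by rewrite /cosh2 opprK addrC. Qed.

Lemma cosh2M a b : cosh2 a * cosh2 b = cosh2 (a + b) + cosh2 (a - b).
Proof.
rewrite /cosh2 mulrDl !mulrDr -!expRD opprD opprB.
have -> : - a + b = b - a by ring.
have -> : - a + - b = - b - a by ring.
ring.
Qed.

Lemma ler_cosh2 a b : 0 <= a -> a <= b -> cosh2 a <= cosh2 b.
Proof.
move=> a0 ab; rewrite /cosh2 -subr_ge0.
have -> : expR b + expR (- b) - (expR a + expR (- a)) =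
    (expR b - expR a) * (1 - expR (- (a + b))).
  rewrite mulrBr mulr1 mulrBl -!expRD.
  have -> : b + - (a + b) = - a by ring.
  have -> : a + - (a + b) = - b by ring.
  ring.
apply: mulr_ge0; first by rewrite subr_ge0 ler_expR.
by rewrite subr_ge0 -expR0 ler_expR oppr_le0; lra.
Qed.

Lemma ler_cosh2_sqr u w : u ^+ 2 <= w ^+ 2 -> cosh2 u <= cosh2 w.
Proof.
have cosh2_norm v : cosh2 v = cosh2 `|v| by case: (ger0P v) => // _; rewrite cosh2N.
move=> uw; rewrite (cosh2_norm u) (cosh2_norm w); apply: ler_cosh2 => //.
by rewrite -(@ler_pXn2r _ 2) ?nnegrE // -!normrX !ger0_norm ?sqr_ge0.
Qed.

End cosh2.

Section single_crossing.
Local Open Scope ereal_scope.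
Context d (T : measurableType d) (R : realType) (mu : {measure set T -> \bar R}).
Implicit Types (A B D E : set T) (f g h : T -> R) (V : T -> \bar R).

Lemma ge0_integral_diff E f g : measurable E ->
  measurable_fun E f -> measurable_fun E g ->
  (forall x, E x -> 0 <= f x <= g x)%R ->
  \int[mu]_(x in E) (g x)%:E =
  \int[mu]_(x in E) (f x)%:E + \int[mu]_(x in E) (g x - f x)%:E.
Proof.
move=> mE mf mg fg; rewrite -ge0_integralD //.
- by apply: eq_integral => x _; rewrite -EFinD addrC subrK.
- by move=> x /fg /andP[f0 _]; rewrite lee_fin.
- exact/measurable_EFinP.
- by move=> x /fg /andP[_]; rewrite lee_fin subr_ge0.
- exact/measurable_EFinP/measurable_funB.
Qed.

Lemma ge0_integral_mul_diff E f g V : measurable E ->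
  measurable_fun E f -> measurable_fun E g -> measurable_fun E V ->
  (forall x, E x -> 0 <= f x <= g x)%R -> (forall x, E x -> 0 <= V x) ->
  \int[mu]_(x in E) ((g x)%:E * V x) =
  \int[mu]_(x in E) ((f x)%:E * V x) + \int[mu]_(x in E) ((g x - f x)%:E * V x).
Proof.
move=> mE mf mg mV fg V0; rewrite -ge0_integralD //.
- apply: eq_integral => x /[!inE] Ex; have /andP[f0 fgx] := fg x Ex.
  by rewrite -ge0_muleDl ?lee_fin ?subr_ge0 // -EFinD addrC subrK.
- by move=> x Ex; have /andP[f0 _] := fg x Ex; rewrite mule_ge0 ?lee_fin ?V0.
- by apply: emeasurable_funM => //; exact/measurable_EFinP.
- move=> x Ex; have /andP[_ fgx] := fg x Ex.
  by rewrite mule_ge0 ?lee_fin ?subr_ge0 ?V0.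
- by apply: emeasurable_funM => //; exact/measurable_EFinP/measurable_funB.
Qed.

Lemma ge0_integral_mul_ub E h V v : measurable E ->
  measurable_fun E h -> measurable_fun E V -> (forall x, E x -> 0 <= h x)%R ->
  (forall x, E x -> 0 <= V x) -> 0 <= v -> (forall x, E x -> V x <= v) ->
  \int[mu]_(x in E) ((h x)%:E * V x) <= \int[mu]_(x in E) (h x)%:E * v.
Proof.
move=> mE mh mV h0 V0 v0 Vv; rewrite -ge0_integralZr //; last exact/measurable_EFinP.
apply: (ge0_le_integral _ mE).
- by move=> x Ex; rewrite mule_ge0 ?lee_fin ?h0 ?V0.
- by apply: emeasurable_funM => //; exact/measurable_EFinP.
- by apply: emeasurable_funM => //; exact/measurable_EFinP.
- by move=> x Ex; rewrite lee_wpmul2l ?lee_fin ?h0 ?Vv.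
Qed.

Lemma ge0_integral_mul_lb E h V v : measurable E ->
  measurable_fun E h -> measurable_fun E V -> (forall x, E x -> 0 <= h x)%R ->
  0 <= v -> (forall x, E x -> v <= V x) ->
  \int[mu]_(x in E) (h x)%:E * v <= \int[mu]_(x in E) ((h x)%:E * V x).
Proof.
move=> mE mh mV h0 v0 vV; rewrite -ge0_integralZr //; last exact/measurable_EFinP.
apply: (ge0_le_integral _ mE).
- by move=> x Ex; rewrite mule_ge0 ?lee_fin ?h0.
- by apply: emeasurable_funM => //; exact/measurable_EFinP.
- by apply: emeasurable_funM => //; exact/measurable_EFinP.
- by move=> x Ex; rewrite lee_wpmul2l ?lee_fin ?h0 ?vV.
Qed.

Lemma ge0_integral_excess_le A B f g :
  measurable A -> measurable B -> [disjoint A & B] ->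
  measurable_fun (A `|` B) f -> measurable_fun (A `|` B) g ->
  (forall x, A x -> 0 <= g x <= f x)%R -> (forall x, B x -> 0 <= f x <= g x)%R ->
  \int[mu]_(x in A `|` B) (f x)%:E = \int[mu]_(x in A `|` B) (g x)%:E ->
  \int[mu]_(x in A `|` B) (f x)%:E < +oo ->
  \int[mu]_(x in A) (f x - g x)%:E <= \int[mu]_(x in B) (g x - f x)%:E.
Proof.
move=> mA mB AB mf mg gfA fgB fg fin.
have mAB := measurableU _ _ mA mB.
have [mfA mgA] : measurable_fun A f /\ measurable_fun A g.
  by split; apply: measurable_funS mAB _ _ => //; exact: subsetUl.
have [mfB mgB] : measurable_fun B f /\ measurable_fun B g.
  by split; apply: measurable_funS mAB _ _ => //; exact: subsetUr.
have mEf : measurable_fun (A `|` B) (fun x => (f x)%:E) by exact/measurable_EFinP.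
have mEg : measurable_fun (A `|` B) (fun x => (g x)%:E) by exact/measurable_EFinP.
have f0 x : (A `|` B) x -> 0 <= (f x)%:E.
  by case=> [/gfA /andP[g0 gf] | /fgB /andP[]]; rewrite lee_fin // (le_trans g0).
have g0 x : (A `|` B) x -> 0 <= (g x)%:E.
  by case=> [/gfA /andP[] | /fgB /andP[f0' fg']]; rewrite lee_fin // (le_trans f0').
have IA0 : 0 <= \int[mu]_(x in A) (g x)%:E.
  by apply: integral_ge0 => x Ax; apply: g0; left.
have IB0 : 0 <= \int[mu]_(x in B) (f x)%:E.
  by apply: integral_ge0 => x Bx; apply: f0; right.
have DA0 : 0 <= \int[mu]_(x in A) (f x - g x)%:E.
  by apply: integral_ge0 => x /gfA /andP[_]; rewrite lee_fin subr_ge0.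
set X := \int[mu]_(x in A) (g x)%:E + \int[mu]_(x in B) (f x)%:E.
have Xf : \int[mu]_(x in A `|` B) (f x)%:E = X + \int[mu]_(x in A) (f x - g x)%:E.
  by rewrite ge0_integral_setU // (ge0_integral_diff mA mgA mfA gfA) addeAC.
have Xg : \int[mu]_(x in A `|` B) (g x)%:E = X + \int[mu]_(x in B) (g x - f x)%:E.
  by rewrite ge0_integral_setU // (ge0_integral_diff mB mfB mgB fgB) addeA.
have Xfin : X \is a fin_num.
  rewrite ge0_fin_numE; last exact: adde_ge0.
  by apply: le_lt_trans fin; rewrite Xf leeDl.
by rewrite -(leeD2lE _ _ Xfin) -Xf -Xg fg.
Qed.

Lemma ereal_threshold A B V : (forall y, B y -> 0 <= V y) ->
  (forall x y, A x -> B y -> V x <= V y) ->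
  exists v, [/\ 0 <= v, forall x, A x -> V x <= v & forall y, B y -> v <= V y].
Proof.
move=> V0 VAB; exists (maxe (ereal_sup (V @` A)) 0); split.
- by rewrite le_max lexx orbT.
- by move=> x Ax; rewrite le_max ereal_sup_ubound //; exists x.
- move=> y By; rewrite ge_max V0 // andbT.
  by apply: ge_ereal_sup => _ [x Ax <-]; exact: VAB.
Qed.

Lemma ge0_integral_mul_le_threshold A B f g V v :
  measurable A -> measurable B ->
  measurable_fun (A `|` B) f -> measurable_fun (A `|` B) g ->
  measurable_fun (A `|` B) V -> (forall x, (A `|` B) x -> 0 <= V x) ->
  (forall x, A x -> 0 <= g x <= f x)%R -> (forall x, B x -> 0 <= f x <= g x)%R ->
  0 <= v -> (forall x, A x -> V x <= v) -> (forall x, B x -> v <= V x) ->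
  \int[mu]_(x in A) (f x - g x)%:E <= \int[mu]_(x in B) (g x - f x)%:E ->
  \int[mu]_(x in A) ((f x)%:E * V x) + \int[mu]_(x in B) ((f x)%:E * V x) <=
  \int[mu]_(x in A) ((g x)%:E * V x) + \int[mu]_(x in B) ((g x)%:E * V x).
Proof.
move=> mA mB mf mg mV V0 gfA fgB v0 VvA vVB excess.
have mAB := measurableU _ _ mA mB.
have [mfA mgA mVA] : [/\ measurable_fun A f, measurable_fun A g & measurable_fun A V].
  by split; apply: measurable_funS mAB _ _ => //; exact: subsetUl.
have [mfB mgB mVB] : [/\ measurable_fun B f, measurable_fun B g & measurable_fun B V].
  by split; apply: measurable_funS mAB _ _ => //; exact: subsetUr.
have V0A x : A x -> 0 <= V x by move=> Ax; apply: V0; left.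
have V0B x : B x -> 0 <= V x by move=> Bx; apply: V0; right.
have fgA0 x : A x -> (0 <= f x - g x)%R by move=> /gfA /andP[_]; rewrite subr_ge0.
have gfB0 x : B x -> (0 <= g x - f x)%R by move=> /fgB /andP[_]; rewrite subr_ge0.
rewrite (ge0_integral_mul_diff mA mgA mfA mVA gfA V0A).
rewrite (ge0_integral_mul_diff mB mfB mgB mVB fgB V0B).
rewrite -addeA; apply: leeD2l; rewrite addeC; apply: leeD2l.
apply: le_trans (ge0_integral_mul_ub mA (measurable_funB mfA mgA) mVA fgA0 V0A v0 VvA) _.
apply: le_trans (ge0_integral_mul_lb mB (measurable_funB mgB mfB) mVB gfB0 v0 vVB).
exact: lee_wpmul2r.
Qed.

(* Karlin's single-crossing lemma: when [g - f] changes sign once along [V],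
   from negative to positive, trading [f] for [g] moves mass to larger [V]. *)
Lemma ge0_integral_single_crossing D f g V : measurable D ->
  measurable_fun D f -> measurable_fun D g -> measurable_fun D V ->
  (forall x, D x -> 0 <= f x)%R -> (forall x, D x -> 0 <= g x)%R ->
  (forall x, D x -> 0 <= V x) ->
  (forall x y, D x -> D y -> (g x <= f x)%R -> (f y < g y)%R -> V x <= V y) ->
  \int[mu]_(x in D) (f x)%:E = \int[mu]_(x in D) (g x)%:E ->
  \int[mu]_(x in D) (f x)%:E < +oo ->
  \int[mu]_(x in D) ((f x)%:E * V x) <= \int[mu]_(x in D) ((g x)%:E * V x).
Proof.
move=> mD mf mg mV f0 g0 V0 Vfg fg fin.
pose A := D `&` [set x | g x <= f x]%R; pose B := D `\` A.
have mA : measurable A by exact: measurable_fun_le.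
have mB : measurable B by exact: measurableD.
have BD : B `<=` D by exact: subDsetl.
have DAB : D = A `|` B by rewrite setDUK //; exact: subIsetl.
have gfA x : A x -> (0 <= g x <= f x)%R by case=> Dx /= ->; rewrite g0.
have fgB x : B x -> (f x < g x)%R.
  by case=> Dx nA; rewrite ltNge; apply/negP => gf; apply: nA.
have fgB' x : B x -> (0 <= f x <= g x)%R.
  by move=> Bx; rewrite f0 ?ltW ?fgB //; case: Bx.
have [v [v0 VvA vVB]] : exists v,
    [/\ 0 <= v, forall x, A x -> V x <= v & forall y, B y -> v <= V y].
  apply: ereal_threshold => [y /BD /V0 //|x y [Dx gfx] By].
  exact: Vfg Dx (BD _ By) gfx (fgB _ By).
have fV0 x : D x -> 0 <= (f x)%:E * V x by move=> Dx; rewrite mule_ge0 ?lee_fin ?f0 ?V0.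
have gV0 x : D x -> 0 <= (g x)%:E * V x by move=> Dx; rewrite mule_ge0 ?lee_fin ?g0 ?V0.
have mfV : measurable_fun D (fun x => (f x)%:E * V x).
  by apply: emeasurable_funM => //; exact/measurable_EFinP.
have mgV : measurable_fun D (fun x => (g x)%:E * V x).
  by apply: emeasurable_funM => //; exact/measurable_EFinP.
have AB : [disjoint A & B] by rewrite disj_set2E setDIK.
rewrite DAB !ge0_integral_setU -?DAB //.
apply: ge0_integral_mul_le_threshold v0 VvA vVB _; rewrite -?DAB //.
by apply: ge0_integral_excess_le; rewrite -?DAB.
Qed.

End single_crossing.

Section folded_gaussian.
Variables (R : realType) (sigma : R).
Hypothesis sigma_gt0 : 0 < sigma.
Implicit Types x y m s : R.

Lemma varphi_gt0 x s : 0 < varphi sigma x s.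
Proof. by rewrite /varphi addr_gt0 ?expR_gt0. Qed.

Lemma varphiN x s : varphi sigma x (- s) = varphi sigma x s.
Proof. by rewrite /varphi opprK addrC. Qed.

Lemma varphi_normr x s : varphi sigma x `|s| = varphi sigma x s.
Proof. by case: (ger0P s) => // _; rewrite varphiN. Qed.

Lemma varphiE x s : varphi sigma x s =
  expR (- (x ^+ 2 + s ^+ 2) / (2 * sigma ^+ 2)) * cosh2 (x * s / sigma ^+ 2).
Proof.
have s0 : sigma != 0 by rewrite gt_eqF.
rewrite /varphi /psi /cosh2 mulrDr -!expRD.
by congr (expR _ + expR _); field; rewrite ?expf_neq0.
Qed.

(* Monotone likelihood ratio: [x |-> varphi x s2 / varphi x s1] is nondecreasing. *)
Lemma varphi_mlr x y s1 s2 : 0 <= y -> y <= x -> 0 <= s1 -> s1 <= s2 ->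
  varphi sigma x s1 * varphi sigma y s2 <= varphi sigma x s2 * varphi sigma y s1.
Proof.
move=> y0 yx s10 s12; have x0 : 0 <= x by lra.
have s20 : 0 <= s2 by lra.
rewrite !varphiE mulrACA [leRHS]mulrACA -!expRD.
set k := 2 * sigma ^+ 2.
have -> : - (x ^+ 2 + s2 ^+ 2) / k + - (y ^+ 2 + s1 ^+ 2) / k =
          - (x ^+ 2 + s1 ^+ 2) / k + - (y ^+ 2 + s2 ^+ 2) / k by ring.
rewrite ler_wpM2l ?expR_ge0 // !cosh2M; set u := (sigma ^+ 2)^-1.
have u0 : 0 <= u by rewrite invr_ge0 sqr_ge0.
apply: lerD; apply: ler_cosh2_sqr; rewrite -subr_ge0.
- have -> : (x * s2 * u + y * s1 * u) ^+ 2 - (x * s1 * u + y * s2 * u) ^+ 2 =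
            u ^+ 2 * ((x - y) * (s2 - s1)) * ((x * s2 + y * s1) + (x * s1 + y * s2))
    by ring.
  by rewrite !mulr_ge0 ?sqr_ge0 ?subr_ge0 // !addr_ge0 ?mulr_ge0.
- have -> : (x * s2 * u - y * s1 * u) ^+ 2 - (x * s1 * u - y * s2 * u) ^+ 2 =
            u ^+ 2 * ((x ^+ 2 - y ^+ 2) * (s2 ^+ 2 - s1 ^+ 2)) by ring.
  by rewrite !mulr_ge0 ?sqr_ge0 // subr_ge0 ler_pXn2r.
Qed.

Lemma varphi_single_crossing x y s1 s2 : 0 <= y -> 0 <= s1 -> s1 <= s2 ->
  varphi sigma x s2 <= varphi sigma x s1 -> varphi sigma y s1 < varphi sigma y s2 ->
  x <= y.
Proof.
move=> y0 s10 s12 hx hy; rewrite leNgt; apply/negP => yx.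
have := varphi_mlr y0 (ltW yx) s10 s12.
have := varphi_gt0 x s1; have := varphi_gt0 y s1.
have : varphi sigma x s2 * varphi sigma y s1 <= varphi sigma x s1 * varphi sigma y s1.
  by rewrite ler_pM2r ?varphi_gt0.
have : varphi sigma x s1 * varphi sigma y s1 < varphi sigma x s1 * varphi sigma y s2.
  by rewrite ltr_pM2l ?varphi_gt0.
lra.
Qed.

Lemma continuous_psi_shift m : continuous (fun x => psi sigma (x - m)).
Proof.
move=> x; apply: (cvg_comp _ expR); last exact: continuous_expR.
apply: cvgM; last exact: cvg_cst.
apply: (@cvgN _ R^o); apply: (cvg_comp (fun x => x - m) (fun x => x ^+ 2)).
  by apply: (@cvgB _ R^o); [exact: cvg_id | exact: cvg_cst].
exact: sqr_continuous.
Qed.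

Lemma measurable_psi_shift m (D : set R) :
  measurable_fun D (fun x => (psi sigma (x - m))%:E).
Proof.
apply/measurable_funTS/measurable_EFinP.
by apply: continuous_measurable_fun; exact: continuous_psi_shift.
Qed.

Lemma measurable_varphi s (D : set R) : measurable_fun D (fun x => varphi sigma x s).
Proof.
apply/measurable_funTS/measurable_funD; apply: continuous_measurable_fun.
  exact: continuous_psi_shift.
by rewrite -[s]opprK; exact: continuous_psi_shift.
Qed.

Lemma integral_psi_shift m :
  (\int[lebesgue_measure]_x (psi sigma (x - m))%:E = (normal_peak sigma)^-1%:E)%E.
Proof.
have s0 : sigma != 0 by rewrite gt_eqF.
have peak0 : normal_peak sigma != 0 by rewrite gt_eqF // normal_peak_gt0.
have := integral_normal_pdf m sigma; rewrite /normal_pdf (negbTE s0).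
under eq_integral do rewrite EFinM.
rewrite ge0_integralZl_EFin //=; last 3 first.
- by move=> x _; rewrite lee_fin normal_fun_ge0.
- by apply/measurable_EFinP; exact: measurable_normal_fun.
- exact: normal_peak_ge0.
have -> : (fun x => (normal_fun m sigma x)%:E) = (fun x => (psi sigma (x - m))%:E).
  by apply/funext => x; rewrite /psi /normal_fun mulr_natl mulrC.
move=> /(congr1 (fun e => (normal_peak sigma)^-1%:E * e)%E).
by rewrite muleA -EFinM mulVf // mul1e mule1.
Qed.

Lemma integral_varphi s :
  intRp (fun x => (varphi sigma x s)%:E) = (normal_peak sigma)^-1%:E.
Proof.
have psi0 m x : (0 <= (psi sigma (x - m))%:E)%E by rewrite lee_fin expR_ge0.
rewrite /intRp /varphi; under eq_integral do rewrite EFinD.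
rewrite ge0_integralD //; last 3 first.
- exact: measurable_psi_shift.
- by move=> x _; rewrite -[s]opprK psi0.
- by rewrite -[s]opprK; exact: measurable_psi_shift.
have -> : (\int[lebesgue_measure]_(x in `[0%R, +oo[) (psi sigma (x + s))%:E =
           \int[lebesgue_measure]_(x in `]-oo, 0%R]) (psi sigma (x - s))%:E)%E.
  rewrite -[in `]-oo, 0%R]]oppr0 ge0_integration_by_substitutionNy.
  - by apply: eq_integral => x _; rewrite /= -opprD /psi sqrrN.
  - exact/continuous_subspaceT/continuous_psi_shift.
  - by move=> x _; exact: expR_ge0.
rewrite addeC -integral_itv_bndo_bndc; last exact: measurable_psi_shift.
rewrite -ge0_integral_setU //=; last 2 first.
- exact: measurable_psi_shift.
- by rewrite -setCitvl; exact/disj_setPCl.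
by rewrite -setCitvl setUv integral_psi_shift.
Qed.

End folded_gaussian.

Section value_iteration.
Variables (R : realType) (a sigma gamma lambda p01 p10 : R).
Hypotheses (sigma_gt0 : 0 < sigma) (gamma_gt0 : 0 < gamma).
Hypotheses (p01_01 : 0 <= p01 <= 1) (p10_01 : 0 <= p10 <= 1).

Definition nondecreasing_Rp (V : R -> \bar R) :=
  forall x y, 0 <= x -> x <= y -> (V x <= V y)%E.

Lemma nondecreasing_Rp_measurable V :
  nondecreasing_Rp V -> measurable_fun (`[0%R, +oo[ : set R) V.
Proof.
move=> ndV mD; apply: (measurability _ (ErealGenCInfty.measurableE R)) => //.
move=> _ [_ [r ->] <-].
apply: is_interval_measurable => s t /= [] + hs [] + ht z /andP[sz zt].
move: hs; rewrite in_itv /= andbT => hs.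
move=> /[!in_itv]/=; rewrite andbT => s0 _; split.
  by rewrite andbT (le_trans s0 sz).
by rewrite andbT (le_trans hs (ndV _ _ s0 sz)).
Qed.

Lemma le_intRp_varphi s1 s2 V : 0 <= s1 -> s1 <= s2 ->
  (forall x, 0 <= V x)%E -> nondecreasing_Rp V ->
  (intRp (fun x => (varphi sigma x s1)%:E * V x) <=
   intRp (fun x => (varphi sigma x s2)%:E * V x))%E.
Proof.
move=> s10 s12 V0 ndV.
have mass s : (\int[lebesgue_measure]_(x in `[0%R, +oo[) (varphi sigma x s)%:E =
    (normal_peak sigma)^-1%:E)%E := integral_varphi sigma_gt0 s.
have cross x y : 0 <= x -> 0 <= y -> varphi sigma x s2 <= varphi sigma x s1 ->
    varphi sigma y s1 < varphi sigma y s2 -> (V x <= V y)%E.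
  move=> x0 y0 hx hy; apply: (ndV _ _ x0).
  exact: (varphi_single_crossing sigma_gt0 y0 s10 s12 hx hy).
apply: (@ge0_integral_single_crossing _ _ R lebesgue_measure).
- exact: measurable_itv.
- exact: measurable_varphi.
- exact: measurable_varphi.
- exact: nondecreasing_Rp_measurable.
- by move=> x _; exact/ltW/varphi_gt0.
- by move=> x _; exact/ltW/varphi_gt0.
- by move=> x _; exact: V0.
- by move=> x y; rewrite /= !in_itv /= !andbT; exact: cross.
- by rewrite !mass.
- by rewrite mass ltry.
Qed.

Lemma ptrans_ge0 c c' : 0 <= ptrans p01 p10 c c'.
Proof.
by move: p01_01 p10_01 => /andP[? ?] /andP[? ?]; case: c; case: c' => /=; lra.
Qed.

Lemma kernel_term_ge0 k V c : (forall x, 0 <= k x) -> (forall x c', 0 <= V x c')%E ->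
  (0 <= kernel_term p01 p10 k V c)%E.
Proof.
move=> k0 V0; rewrite /kernel_term big_bool.
by rewrite adde_ge0 // mule_ge0 ?lee_fin ?ptrans_ge0 //;
  apply: integral_ge0 => x _; rewrite mule_ge0 ?lee_fin.
Qed.

Lemma le_kernel_term_varphi s1 s2 V c : `|s1| <= `|s2| ->
  (forall x c', 0 <= V x c')%E -> (forall c', nondecreasing_Rp (V ^~ c')) ->
  (kernel_term p01 p10 (fun x => varphi sigma x s1) V c <=
   kernel_term p01 p10 (fun x => varphi sigma x s2) V c)%E.
Proof.
move=> s12 V0 ndV; apply: lee_sum => c' _.
apply: lee_wpmul2l; first by rewrite lee_fin ptrans_ge0.
have intRp_varphi_normr (s : R) :
    intRp (fun x => (varphi sigma x `|s|)%:E * V x c')%E =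
    intRp (fun x => (varphi sigma x s)%:E * V x c')%E.
  by congr intRp; apply/funext => x; rewrite varphi_normr.
rewrite -intRp_varphi_normr -[leRHS]intRp_varphi_normr.
exact: (le_intRp_varphi (normr_ge0 s1) s12 (V0 ^~ c') (ndV c')).
Qed.

Local Notation V t := (Vt a sigma gamma lambda p01 p10 t).

Lemma Qt1_weights_ge0 (c : bool) :
  0 <= 1 - (c : nat)%:R :> R /\ 0 <= 2 * (c : nat)%:R :> R.
Proof. by case: c => /=; split; lra. Qed.

Lemma Vt_ge0 t D c : (0 <= V t D c)%E.
Proof.
elim: t D c => [//|t IH] D c /=.
have varphi0 s x : 0 <= varphi sigma x s by exact/ltW/varphi_gt0.
have psi0 x : 0 <= psi sigma x by exact: expR_ge0.
have [c0 c1] := Qt1_weights_ge0 c.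
rewrite le_min /Qt0 /Qt1 !mule_ge0 ?adde_ge0 ?mule_ge0 ?kernel_term_ge0 //;
  by rewrite lee_fin ?mulr_ge0 ?expR_ge0.
Qed.

Lemma Vt_nondecreasing t c : nondecreasing_Rp (V t ^~ c).
Proof.
elim: t c => [c D1 D2 _ _ //|t IH c D1 D2 D10 D12 /=].
have [c0 _] := Qt1_weights_ge0 c.
have K : (kernel_term p01 p10 (fun x => varphi sigma x (a * D1)) (V t) c <=
          kernel_term p01 p10 (fun x => varphi sigma x (a * D2)) (V t) c)%E.
  apply: le_kernel_term_varphi => //; last exact: Vt_ge0.
  by rewrite !normrM ler_wpM2l // !ger0_norm //; lra.
have K0 : (0 <= kernel_term p01 p10 (fun x => varphi sigma x (a * D1)) (V t) c)%E.
  by apply: kernel_term_ge0 => [x|x c']; [exact/ltW/varphi_gt0 | exact: Vt_ge0].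
have sqrD : D1 ^+ 2 <= D2 ^+ 2 by rewrite ler_pXn2r // nnegrE; lra.
have gammaD : gamma * D1 ^+ 2 <= gamma * D2 ^+ 2 by rewrite ler_wpM2l // ltW.
apply: le_min2; rewrite /Qt0 /Qt1.
- by apply: lee_pmul K; rewrite ?lee_fin ?expR_ge0 ?ler_expR.
- apply: leeD2r; apply: lee_pmul K; rewrite ?lee_fin ?mulr_ge0 ?expR_ge0 //.
  by rewrite ler_wpM2l ?ler_expR ?mulrDr ?lerD2l.
Qed.

End value_iteration.

Theorem proposition4 (R : realType) (a sigma gamma lambda p01 p10 : R) (T : nat) :
  0 < sigma -> 0 < gamma -> 0 < lambda -> (1 <= T)%N ->
  0 <= p01 <= 1 -> 0 <= p10 <= 1 ->
  forall (c : bool) (t : nat), (t <= T)%N ->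
  forall D1 D2 : R, 0 <= D1 -> D1 <= D2 ->
  (Vt a sigma gamma lambda p01 p10 t D1 c <= Vt a sigma gamma lambda p01 p10 t D2 c)%E.
Proof.
move=> sigma_gt0 gamma_gt0 _ _ p01_01 p10_01 c t _.
exact: Vt_nondecreasing.
Qed.
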